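(* Let $\pi$ be a propositional formula and $\varphi$ a formula of the basic modal language (built from $\top$, atoms, $\lnot$, $\land$, $\Box$). Then the formula $(\Box\pi\land\varphi)\to[\dagger\pi][!\pi]\varphi$ is true at every world of every transitive model.
   Context: Fix a countable non-empty set $\mathit{At}$ of atoms. A model is $\mathcal{M}=\langle W,R,V\rangle$, $W\neq\varnothing$, $R\subseteq W\times W$, $V:\mathit{At}\to\mathcal{P}(W)$, with standard Kripke semantics ($\mathcal{M},w\models\Box\psi$ iff $\psi$ holds at all $R$-successors of $w$); it is transitive if $R$ is transitive. A literal is an atom or its negation; a clause is a finite set $D$ of literals read as $\bigvee D$ ($\bigvee\varnothing:=\bot$), tautological if it contains $p$ and $\lnot p$ for some $p$. For propositional $\pi$, $\mathcal{C}(\pi)$ is the set of non-tautological clauses $D$ with $\models\pi\to\bigvee D$ and no $D'\subsetneq D$ with $\models\pi\to\bigvee D'$. For a model $\mathcal{M}$ and a non-tautological clause $D$, $\mathcal{M}^{(D)}_u=\langle W',R',V'\rangle$ has $W'=W\times\{0,1\}$, $(w,i)R'(v,j)$ iff $wRv$, $(w,0)\in V'(p)$ iff $w\in V(p)$, and $(w,1)\in V'(p)$ iff $\lnot p\in D$, or $\{p,\lnot p\}\cap D=\varnothing$ and $w\in V(p)$. Forgetting: $\mathcal{M},w\models[\dagger\pi]\psi$ iff for all $D\in\mathcal{C}(\pi)$, $\mathcal{M}^{(D)}_u,(w,0)\models\psi$. Public announcement: $\mathcal{M},w\models[!\pi]\psi$ iff ($\mathcal{M},w\models\pi$ implies $\mathcal{M}|_\pi,w\models\psi$),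 where $\mathcal{M}|_\pi$ is the restriction of $\mathcal{M}$ (domain, relation and valuation) to the set of worlds of $\mathcal{M}$ satisfying $\pi$. *)

From mathcomp Require Import all_boot.
From mathcomp Require Import finmap.
Set Implicit Arguments.
Unset Strict Implicit.
Unset Printing Implicit Defensive.
Local Open Scope fset_scope.

Section Logic.
Variable At : countType.

Inductive pform : Type :=
| PTop : pform
| PAtom : At -> pform
| PNot : pform -> pform
| PAnd : pform -> pform -> pform.

(* The full language: basic modal connectives plus forgetting [dagger pi]
   (pi propositional) and public announcement [!chi]. *)
Inductive form : Type :=
| FTop : form
| FAtom : At -> form
| FNot : form -> form
| FAnd : form -> form -> form
| FBox : form -> form
| FForget : pform -> form -> form
| FAnn : form -> form -> form.

Fixpoint embed (p : pform) : form :=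
  match p with
  | PTop => FTop
  | PAtom a => FAtom a
  | PNot q => FNot (embed q)
  | PAnd q r => FAnd (embed q) (embed r)
  end.

Definition FImp (f g : form) : form := FNot (FAnd f (FNot g)).

Fixpoint basic (f : form) : Prop :=
  match f with
  | FTop | FAtom _ => True
  | FNot g | FBox g => basic g
  | FAnd g h => basic g /\ basic h
  | FForget _ _ | FAnn _ _ => False
  end.

(* Literals: (true, p) is the atom p, (false, p) is its negation. *)
Definition lit := (bool * At)%type.
Definition clause := {fset lit}.

Fixpoint peval (v : At -> bool) (p : pform) : bool :=
  match p with
  | PTop => true
  | PAtom a => v a
  | PNot q => ~~ peval v q
  | PAnd q r => peval v q && peval v r
  end.

Definition lit_true (v : At -> bool) (l : lit) : bool :=
  if l.1 then v l.2 else ~~ v l.2.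

Definition entails_clause (p : pform) (D : clause) : Prop :=
  forall v : At -> bool, peval v p -> exists2 l, l \in D & lit_true v l.

Definition tautological (D : clause) : Prop :=
  exists a : At, (true, a) \in D /\ (false, a) \in D.

Definition inC (p : pform) (D : clause) : Prop :=
  ~ tautological D /\ entails_clause p D /\
  ~ (exists D' : clause, D' `<` D /\ entails_clause p D').

Record model : Type := Model {
  world : Type;
  rel : world -> world -> Prop;
  val : At -> world -> Prop }.

Definition transitive_model (M : model) : Prop :=
  forall x y z : world M, rel x y -> rel y z -> rel x z.

Definition upd (M : model) (D : clause) : model :=
  @Model (world M * bool)%type
    (fun x y => rel x.1 y.1)
    (fun a x => if x.2 then
                  (false, a) \in D \/
                  ((true, a) \notin D /\ (false, a) \notin D /\ val a x.1)
                else val a x.1).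

Definition restrict (M : model) (S : world M -> Prop) : model :=
  @Model {w : world M | S w}
    (fun x y => rel (proj1_sig x) (proj1_sig y))
    (fun a x => val a (proj1_sig x)).

Fixpoint sat (f : form) : forall M : model, world M -> Prop :=
  match f with
  | FTop => fun _ _ => True
  | FAtom a => fun M w => val a w
  | FNot g => fun M w => ~ sat g w
  | FAnd g h => fun M w => sat g w /\ sat h w
  | FBox g => fun M w => forall v, rel w v -> sat g v
  | FForget p g => fun M w =>
      forall D : clause, inC p D -> sat g (M := upd M D) (w, false)
  | FAnn g h => fun M w =>
      forall H : sat g w, sat h (M := restrict (fun x => sat g x)) (exist _ w H)
  end.

End Logic.

From Pilot Require Import Defs.
From mathcomp Require Import all_boot.
From mathcomp Require Import finmap.
From mathcomp Require Import boolp.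
Set Implicit Arguments.
Unset Strict Implicit.
Unset Printing Implicit Defensive.

(* At a world (u, 1) of M^(D)_u (encoded as (u, true)) every literal of D is
   false, so pi, which entails the disjunction of D, fails there: announcing pi
   deletes the whole second copy. The first copy carries the valuation of M, and
   pi holds at every successor of w, hence by transitivity throughout the cone
   of w; so announcing pi leaves the cone of (w, 0) an exact copy of the cone of
   w, on which basic formulas are evaluated as in M. *)

Definition valuation_at (At : countType) (M : model At) (x : world M) : At -> bool :=
  fun a => `[< Defs.val a x >].
Arguments valuation_at {At M}.

Section Update.
Variable At : countType.

Lemma sat_embedE (M : model At) (p : pform At) (x : world M) :
  sat (embed p) x <-> peval (valuation_at x) p.
Proof.
elim: p => [|a|q IHq|q IHq r IHr] /=.
- by [].
- exact: rwP (asboolP _).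
- by rewrite IHq; split => [/negP | /negP].
- by rewrite IHq IHr; split => [[-> ->] | /andP].
Qed.

Lemma sat_embed_upd_copy0 (M : model At) (D : clause At) (p : pform At) (v : world M) :
  sat (embed p) (M := upd M D) (v, false) <-> sat (embed p) v.
Proof. by elim: p => [|a|q IHq|q IHq r IHr] //=; rewrite ?IHq ?IHr. Qed.

Lemma lit_false_upd_copy1 (M : model At) (D : clause At) (u : world M) (l : lit At) :
  ~ tautological D -> l \in D ->
  ~~ lit_true (@valuation_at _ (upd M D) (u, true)) l.
Proof.
case: l => [[] a] ntD lD; rewrite /lit_true /valuation_at /=.
- apply/asboolPn => -[negD | [] //]; first by apply: ntD; exists a.
  by rewrite lD.
- by rewrite negbK; apply/asboolP; left.
Qed.

Lemma inC_not_sat_upd_copy1 (M : model At) (pi : pform At) (D : clause At) :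
  inC pi D -> forall u : world M, ~ sat (embed pi) (M := upd M D) (u, true).
Proof.
move=> [ntD [entD _]] u /sat_embedE /entD [l lD].
by apply/negP; apply: lit_false_upd_copy1.
Qed.

End Update.

Section Announcement.
Variables (At : countType) (M : model At) (D : clause At) (pi : pform At) (w : world M).
Hypothesis transM : transitive_model M.
Hypothesis box_pi : forall v, Defs.rel w v -> sat (embed pi) v.
Hypothesis copy1_not_pi : forall u, ~ sat (embed pi) (M := upd M D) (u, true).

Definition cone (v : world M) : Prop := v = w \/ Defs.rel w v.

Let announced := restrict (fun x : world (upd M D) => sat (embed pi) x).

Lemma cone_rel (v u : world M) : cone v -> Defs.rel v u -> Defs.rel w u.
Proof. by move=> [-> // | wv] vu; apply: transM wv vu. Qed.

Lemma sat_basic_announce_upd (f : form At) : basic f ->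
  forall (v : world M) (cv : cone v) (pv : sat (embed pi) (M := upd M D) (v, false)),
  sat f (M := announced) (exist _ (v, false) pv) <-> sat f v.
Proof.
elim: f => [|a|g IHg|g IHg h IHh|g IHg|p g _|g _ h _] //= bf v cv pv.
- by rewrite IHg.
- by rewrite IHg ?IHh //; case: bf.
- have pu u (vu : Defs.rel v u) : sat (embed pi) (M := upd M D) (u, false).
    by apply/sat_embed_upd_copy0/box_pi; exact: cone_rel cv vu.
  split=> [gN u vu | gM [[u []] pu'] /= vu].
  + by apply/(IHg bf u (or_intror (cone_rel cv vu)) (pu u vu)); apply: gN.
  + by case: (copy1_not_pi pu').
  + by apply/(IHg bf u (or_intror (cone_rel cv vu))); apply: gM.
Qed.

End Announcement.

Theorem proposition4 (At : countType) (a0 : At) (pi : pform At) (phi : form At)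
  (Hphi : basic phi) (M : model At) (w : world M) (HM : transitive_model M) :
  sat (FImp (FAnd (FBox (embed pi)) phi) (FForget pi (FAnn (embed pi) phi))) w.
Proof.
move=> /= -[[box_pi phi_w] not_forget]; apply: not_forget => D inCD pw.
have copy1_not_pi := inC_not_sat_upd_copy1 (M := M) inCD.
by apply/(sat_basic_announce_upd HM box_pi copy1_not_pi Hphi (or_introl erefl)).
Qed.
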